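(* Let $X\subseteq\mathbb{C}^n$ be a complex analytic set, $x\in X$, $\mathcal M\subseteq\mathcal O_{X,x}^p$ a submodule with matrix of generators $[\mathcal M]=[g_1\cdots g_r]$, and $k\in\mathbb N$. Write the matrix of generators of $\mathcal M_D$ as $$[\mathcal M_D]=\begin{bmatrix}[\mathcal M]&0\\ [\mathcal M]'&[\tilde{\mathcal M}]\end{bmatrix},$$ where the columns of $[\tilde{\mathcal M}]$ are $(z_i-z_i')g_j'$, $i=1,\dots,n$, $j=1,\dots,r$. Let $\mathcal J_{2k}(\mathcal M_D)$ be the ideal generated by $\{\det(\mathcal M_{IJ})\det(\tilde{\mathcal M}_{KL}): I,J,K,L\ k\text{-indexes}\}$. Then $\mathcal J_{2k}(\mathcal M_D)\subseteq I_\Delta^{k-1}J_2\big((J_k(\mathcal M))_D\big)$ at $(x,x)$.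
   Context: $z_1,\dots,z_n$ are coordinates on $\mathbb C^n$; $\pi_1,\pi_2:X\times X\to X$ are the projections; for an object $A$ on $X$ we write $A$ for $A\circ\pi_1$ and $A'$ for $A\circ\pi_2$. $I_\Delta=(z_1-z_1',\dots,z_n-z_n')$ is the ideal of the diagonal. For a matrix $A$ and $k$-indexes (strictly increasing tuples) $I,J$, $A_{IJ}$ is the submatrix with rows $I$ and columns $J$. For $h\in\mathcal O_X^q$, $h_D=(h\circ\pi_1,h\circ\pi_2)$, and for a submodule or ideal $N$, $N_D$ is generated by $\{h_D:h\in N\}$. $J_m(N)$ is the ideal of $m\times m$ minors of a matrix of generators of $N$. *)

From mathcomp Require Import all_boot all_algebra.
From mathcomp Require Import all_classical all_reals all_analysis.
From mathcomp Require Import complex.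
Import numFieldNormedType.Exports.

Set Implicit Arguments.
Unset Strict Implicit.
Unset Printing Implicit Defensive.

Import GRing.Theory Num.Theory.
Local Open Scope ring_scope.
Local Open Scope classical_set_scope.

(* The complex numbers C = R[i] (R a real closed field of reals, realType),
   seen as a normed space over itself, and C^n as row vectors, normed over C. *)
Definition Cx (R : realType) : normedModType R[i] := R[i]^o.
Definition Cn (R : realType) (n : nat) : normedModType R[i] := 'rV[R[i]]_n.

(* f is holomorphic in a neighbourhood of a: complex (C-linear Frechet)
   differentiable at every point near a. *)
Definition holo_near (R : realType) (n : nat) (f : Cn R n -> Cx R) (a : Cn R n)
  : Prop := \forall y \near a, differentiable f y.

Definition analytic_set (R : realType) (n : nat) (X : set (Cn R n)) : Prop :=
  exists D : set (Cn R n), [/\ open D, X `<=` D &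
    forall a, D a -> exists U : set (Cn R n), [/\ open U, U a, U `<=` D &
      exists m (f : 'I_m -> Cn R n -> Cx R),
        (forall l y, U y -> differentiable (f l) y) /\
        (forall y, U y -> (X y <-> forall l, f l y = 0))]].

(* f belongs to the ideal of O_{Y,y} generated by (the germs of) the functions
   in S: near y, on Y, f is an O-linear combination of finitely many elements
   of S with holomorphic coefficients. *)
Definition germ_ideal (R : realType) (N : nat) (Y : set (Cn R N)) (y : Cn R N)
  (S : set (Cn R N -> Cx R)) (f : Cn R N -> Cx R) : Prop :=
  exists m (s c : 'I_m -> Cn R N -> Cx R),
    [/\ forall l, S (s l), forall l, holo_near (c l) y &
        \forall w \near y, Y w -> f w = \sum_(l < m) c l w * s l w].

Definition kindex (k m : nat) (I : 'I_k -> 'I_m) : Prop :=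
  forall a b : 'I_k, (a < b)%N -> (I a < I b)%N.

Definition minor (R : realType) (p q k : nat) (A : 'M[R[i]]_(p, q))
  (I : 'I_k -> 'I_p) (J : 'I_k -> 'I_q) : R[i] :=
  \det (\matrix_(a, b) A (I a) (J b)).

Definition Mmat (R : realType) (n p r : nat)
  (g : 'I_p -> 'I_r -> Cn R n -> Cx R) (y : Cn R n) : 'M[R[i]]_(p, r) :=
  \matrix_(a, b) (g a b y : R[i]).

(* Points of C^n x C^n are w = (z, z') in C^(n+n); z = pi1 w, z' = pi2 w. *)
Definition pr1 (R : realType) (n : nat) (w : Cn R (n + n)) : Cn R n :=
  lsubmx (w : 'M[R[i]]_(1, n + n)).
Definition pr2 (R : realType) (n : nat) (w : Cn R (n + n)) : Cn R n :=
  rsubmx (w : 'M[R[i]]_(1, n + n)).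
Definition coord (R : realType) (n : nat) (y : Cn R n) (i : 'I_n) : R[i] :=
  (y : 'M[R[i]]_(1, n)) ord0 i.

Definition sqset (R : realType) (n : nat) (X : set (Cn R n)) : set (Cn R (n + n)) :=
  [set w | X (pr1 w) /\ X (pr2 w)].
Definition diagpt (R : realType) (n : nat) (x : Cn R n) : Cn R (n + n) :=
  (row_mx (x : 'M[R[i]]_(1, n)) (x : 'M[R[i]]_(1, n)) : 'M[R[i]]_(1, n + n)).

(* value at w of [M~]: p x (n*r) matrix whose column indexed by
   mxvec_index i j is (z_i - z_i') g_j'. *)
Definition Mtilde (R : realType) (n p r : nat)
  (g : 'I_p -> 'I_r -> Cn R n -> Cx R) (w : Cn R (n + n)) : 'M[R[i]]_(p, n * r) :=
  \matrix_(a < p) mxvec (\matrix_(i < n, j < r)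
      ((coord (pr1 w) i - coord (pr2 w) i) * (g a j (pr2 w) : R[i]))).

Definition J2kMD_gens (R : realType) (n p r k : nat)
  (g : 'I_p -> 'I_r -> Cn R n -> Cx R) : set (Cn R (n + n) -> Cx R) :=
  [set f | exists (I : 'I_k -> 'I_p) (J : 'I_k -> 'I_r)
                  (K : 'I_k -> 'I_p) (L : 'I_k -> 'I_(n * r)),
     [/\ kindex I, kindex J, kindex K, kindex L &
         f = fun w => minor (Mmat g (pr1 w)) I J * minor (Mtilde g w) K L]].

Definition in_Jk (R : realType) (n p r k : nat) (X : set (Cn R n)) (x : Cn R n)
  (g : 'I_p -> 'I_r -> Cn R n -> Cx R) (h : Cn R n -> Cx R) : Prop :=
  holo_near h x /\
  germ_ideal X x
    [set f | exists (I : 'I_k -> 'I_p) (J : 'I_k -> 'I_r),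
       [/\ kindex I, kindex J & f = fun y => minor (Mmat g y) I J]] h.

(* generators of I_Delta^(k-1) J_2((J_k(M))_D): a product of k-1 generators
   z_i - z_i' of I_Delta times a 2x2 minor  h l' - l h'  of two generators
   h_D = (h, h'), l_D = (l, l') of (J_k(M))_D, h, l in J_k(M). *)
Definition RHS_gens (R : realType) (n p r k : nat) (X : set (Cn R n)) (x : Cn R n)
  (g : 'I_p -> 'I_r -> Cn R n -> Cx R) : set (Cn R (n + n) -> Cx R) :=
  [set f | exists (sigma : 'I_k.-1 -> 'I_n) (h l : Cn R n -> Cx R),
     [/\ in_Jk k X x g h, in_Jk k X x g l &
         f = fun w =>
           (\prod_(t < k.-1) (coord (pr1 w) (sigma t) - coord (pr2 w) (sigma t)))
           * ((h (pr1 w) : R[i]) * l (pr2 w) - l (pr1 w) * h (pr2 w))]].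

From Pilot Require Import Defs.
From mathcomp Require Import all_boot all_algebra.
From mathcomp Require Import all_classical all_reals all_analysis.
From mathcomp Require Import complex.
From mathcomp Require Import fingroup perm ring.
(* Re-import so that Defs.coord takes precedence over vector.coord. *)
Import Defs.
Import numFieldNormedType.Exports.
Import GRing.Theory Num.Theory.
Local Open Scope ring_scope.
Local Open Scope classical_set_scope.
Set Implicit Arguments.
Unset Strict Implicit.
Unset Printing Implicit Defensive.

(* Since both sides are ideals of O_{X×X,(x,x)}, it suffices to show that each
   generator  det(M_IJ)(z) · det(M~_KL)(z, z')  lies in the right-hand ideal.
   A column of M~ has the form (z_i - z_i') g_j', so by multilinearity
     det(M~_KL) = det(M'_{K,J'}) · ∏_{t<k} (z_{i_t} - z_{i_t}'),
   where J' is the (possibly unsorted or repeating) list of the j_t.  Up to a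
   constant, det(M'_{K,J'}) is a genuine k-minor m2' of M'.  Writing m1 for
   det(M_IJ) and i0 = i_k, the polynomial identity
     (z_{i0} - z_{i0}') m1 m2' = (z_{i0} m1 · m2' - m2 · z_{i0}' m1')
                                 - z_{i0}' (m1 m2' - m2 m1')
   expresses the generator through the 2×2 minors of (h, l) = (z_{i0} m1, m2)
   and (m1, m2), multiplied by the k-1 remaining factors z_i - z_i'. *)

Section BigDifferentiable.
Variables (K : numFieldType) (V : normedModType K).

Lemma differentiable_big_sum (I : Type) (s : seq I) (F : I -> V -> K) (y : V) :
  (forall i, differentiable (F i) y) ->
  differentiable (fun z => \sum_(i <- s) F i z) y.
Proof.
move=> dF; elim: s => [|a s IH].
  under eq_fun do rewrite big_nil; exact: differentiable_cst.
under eq_fun do rewrite big_cons; exact: differentiableD.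
Qed.

Lemma differentiable_big_prod (I : Type) (s : seq I) (F : I -> V -> K) (y : V) :
  (forall i, differentiable (F i) y) ->
  differentiable (fun z => \prod_(i <- s) F i z) y.
Proof.
move=> dF; elim: s => [|a s IH].
  under eq_fun do rewrite big_nil; exact: differentiable_cst.
under eq_fun do rewrite big_cons; exact: differentiableM.
Qed.

(* The Leibniz formula makes \det a polynomial in the entries. *)
Lemma differentiable_det (m : nat) (A : V -> 'M[K]_m) (y : V) :
  (forall a b, differentiable (fun z => A z a b) y) ->
  differentiable (fun z => \det (A z)) y.
Proof.
move=> dA; apply: differentiable_big_sum => s.
apply: differentiableM; first exact: differentiable_cst.
by apply: differentiable_big_prod => i; apply: dA.
Qed.

End BigDifferentiable.

Section Germs.
Variables (R : realType) (N : nat).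

Lemma near_everywhere (P : Cn R N -> Prop) (y : Cn R N) :
  (forall z, P z) -> \forall z \near y, P z.
Proof. exact: (nearW (nbhs_filter y)). Qed.

Lemma holo_everywhere (f : Cn R N -> Cx R) (y : Cn R N) :
  (forall z, differentiable f z) -> holo_near f y.
Proof. exact: near_everywhere. Qed.

Lemma holo_cst (c : Cx R) (y : Cn R N) : holo_near (fun _ => c) y.
Proof. by apply: holo_everywhere => z; apply: differentiable_cst. Qed.

Lemma holo_mul (f g : Cn R N -> Cx R) (y : Cn R N) :
  holo_near f y -> holo_near g y -> holo_near (fun z => f z * g z : Cx R) y.
Proof. by move=> Hf Hg; apply: filterS2 Hf Hg => z; apply: differentiableM. Qed.

Variables (Y : set (Cn R N)) (y : Cn R N) (S : set (Cn R N -> Cx R)).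

Lemma germ_ideal_near (f f' : Cn R N -> Cx R) : germ_ideal Y y S f ->
  (\forall w \near y, Y w -> f' w = f w) -> germ_ideal Y y S f'.
Proof.
move=> [m [s [c [Ss Hc Hf]]]] E; exists m, s, c; split => //.
by apply: filterS2 Hf E => w H1 H2 Yw; rewrite H2 // H1.
Qed.

Lemma germ_ideal_ext (f f' : Cn R N -> Cx R) : germ_ideal Y y S f ->
  f' =1 f -> germ_ideal Y y S f'.
Proof. by move=> Hf E; apply: (germ_ideal_near Hf); apply: near_everywhere => w _. Qed.

Lemma germ_ideal0 : germ_ideal Y y S (fun _ => 0).
Proof.
exists 0%N, (fun _ _ => 0), (fun _ _ => 0); split; [by case | by case |].
by apply: near_everywhere => w _; rewrite big_ord0.
Qed.

Lemma germ_ideal_gen (s : Cn R N -> Cx R) : S s -> germ_ideal Y y S s.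
Proof.
move=> Ss; exists 1%N, (fun _ => s), (fun _ _ => 1); split => //.
  by move=> _; exact: holo_cst.
by apply: near_everywhere => w _; rewrite big_ord1 mul1r.
Qed.

Lemma germ_idealD (f1 f2 : Cn R N -> Cx R) :
  germ_ideal Y y S f1 -> germ_ideal Y y S f2 ->
  germ_ideal Y y S (fun w => f1 w + f2 w).
Proof.
move=> [m1 [s1 [c1 [Ss1 Hc1 Hf1]]]] [m2 [s2 [c2 [Ss2 Hc2 Hf2]]]].
pose glue T (u : 'I_m1 -> T) (v : 'I_m2 -> T) (l : 'I_(m1 + m2)) :=
  match fintype.split l with inl a => u a | inr b => v b end.
exists (m1 + m2)%N, (glue _ s1 s2), (glue _ c1 c2); split.
- by move=> l; rewrite /glue; case: (fintype.split l).
- by move=> l; rewrite /glue; case: (fintype.split l).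
apply: filterS2 Hf1 Hf2 => w H1 H2 Yw; rewrite H1 // H2 // big_split_ord /=.
by congr (_ + _); apply: eq_bigr => i _; rewrite /glue ?(unsplitK (inl i)) ?(unsplitK (inr i)).
Qed.

Lemma germ_idealM (d f : Cn R N -> Cx R) : holo_near d y -> germ_ideal Y y S f ->
  germ_ideal Y y S (fun w => d w * f w).
Proof.
move=> Hd [m [s [c [Ss Hc Hf]]]].
exists m, s, (fun l w => d w * c l w); split => //.
  by move=> l; apply: holo_mul.
apply: filterS Hf => w H Yw; rewrite H // big_distrr /=.
by apply: eq_bigr => l _; rewrite mulrA.
Qed.

Lemma germ_ideal_lincomb m (c s : 'I_m -> Cn R N -> Cx R) :
  (forall l, holo_near (c l) y) -> (forall l, germ_ideal Y y S (s l)) ->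
  germ_ideal Y y S (fun w => \sum_(l < m) c l w * s l w).
Proof.
elim: m c s => [|m IH] c s Hc Hs.
  by apply: germ_ideal_ext germ_ideal0 _ => w; rewrite big_ord0.
apply: germ_ideal_ext; last by move=> w; rewrite big_ord_recr.
apply: germ_idealD; last exact: germ_idealM.
exact: (IH (fun l => c (widen_ord (leqnSn m) l)) (fun l => s (widen_ord (leqnSn m) l))).
Qed.

End Germs.

Section ColumnSelection.
Variable F : comPzRingType.

Definition sorted_cols r k (S : {set 'I_r}) (hS : #|S| = k) (t : 'I_k) : 'I_r :=
  enum_val (cast_ord (esym hS) t).

Lemma kindex_sorted_cols r k (S : {set 'I_r}) (hS : #|S| = k) :
  kindex (sorted_cols hS).
Proof.
move=> a b ab; set x0 := sorted_cols hS a.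
have inc : sorted ltn (map val (enum S)).
  rewrite -[enum _](eq_filter (mem_enum _)) -(eq_filter (mem_map val_inj _)).
  by rewrite -filter_map (sorted_filter ltn_trans) // unlock val_ord_enum iota_ltn_sorted.
have sz : size (map val (enum S)) = k by rewrite size_map -cardE.
have nthE (t : 'I_k) : val (sorted_cols hS t) = nth 0%N (map val (enum S)) t.
  by rewrite /sorted_cols (enum_val_nth x0) (nth_map x0) // -cardE hS.
rewrite !nthE; apply: (sorted_ltn_nth ltn_trans) => //; rewrite inE sz //=.
Qed.

Lemma det_cols_repeated p r k (A : 'M[F]_(p, r)) (K : 'I_k -> 'I_p)
  (J : 'I_k -> 'I_r) : ~~ injectiveb J ->
  \det (\matrix_(a, b) A (K a) (J b)) = 0.
Proof.
move=> /injectivePn [t1 [t2 nt Et]]; rewrite -det_tr.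
by apply: (determinant_alternate nt) => a; rewrite !mxE Et.
Qed.

(* Distinct columns can be sorted at the cost of the sign of a permutation. *)
Lemma det_cols_sort r k (J : 'I_k -> 'I_r) : injective J ->
  exists (e : F) (Js : 'I_k -> 'I_r), kindex Js /\
    forall p (A : 'M[F]_(p, r)) (K : 'I_k -> 'I_p),
      \det (\matrix_(a, b) A (K a) (J b)) = e * \det (\matrix_(a, b) A (K a) (Js b)).
Proof.
move=> injJ; pose S := J @: [set: 'I_k]%SET.
have hS : #|S| = k by rewrite card_imset // cardsT card_ord.
have inS t : J t \in S by apply: imset_f; rewrite inE.
pose pos (t : 'I_k) : 'I_k := cast_ord hS (enum_rank_in (inS t) (J t)).
have posE t : sorted_cols hS (pos t) = J t by rewrite /sorted_cols cast_ordK enum_rankK_in.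
have pos_inj : injective pos by move=> a b E; apply: injJ; rewrite -!posE E.
pose sg := perm pos_inj.
exists ((-1) ^+ (sg^-1)%g), (sorted_cols hS); split; first exact: kindex_sorted_cols.
move=> p A K.
have -> : \matrix_(a, b) A (K a) (J b) =
          col_perm sg (\matrix_(a, b) A (K a) (sorted_cols hS b)).
  by apply/matrixP => a b; rewrite !mxE permE posE.
by rewrite col_permE det_mulmx det_perm mulrC.
Qed.

(* Any column selection: the k-index J0 serves as a witness when the minor
   vanishes. *)
Lemma det_cols_normalize r k (J J0 : 'I_k -> 'I_r) : kindex J0 ->
  exists (e : F) (Js : 'I_k -> 'I_r), kindex Js /\
    forall p (A : 'M[F]_(p, r)) (K : 'I_k -> 'I_p),
      \det (\matrix_(a, b) A (K a) (J b)) = e * \det (\matrix_(a, b) A (K a) (Js b)).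
Proof.
move=> kJ0; have [/injectiveP injJ | ninjJ] := boolP (injectiveb J).
  exact: det_cols_sort.
by exists 0, J0; split => // p A K; rewrite mul0r det_cols_repeated.
Qed.

End ColumnSelection.

Section TildeMinors.
Variable R : realType.

Definition mxvec_unindex m n (q : 'I_(m * n)) : 'I_m * 'I_n :=
  enum_val (cast_ord (esym (mxvec_cast m n)) q).

Lemma mxvec_unindexK m n (q : 'I_(m * n)) :
  mxvec_index (mxvec_unindex q).1 (mxvec_unindex q).2 = q.
Proof.
rewrite /mxvec_index /mxvec_unindex; case E: (enum_val _) => [i j] /=.
by rewrite -E enum_valK cast_ordKV.
Qed.

Lemma Mtilde_minor n p r k (g : 'I_p -> 'I_r -> Cn R n -> Cx R) w
  (K : 'I_k -> 'I_p) (L : 'I_k -> 'I_(n * r)) :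
  minor (Mtilde g w) K L =
    minor (Mmat g (pr2 w)) K (fun t => (mxvec_unindex (L t)).2) *
    \prod_(t < k) (coord (pr1 w) (mxvec_unindex (L t)).1 -
                   coord (pr2 w) (mxvec_unindex (L t)).1).
Proof.
pose d t := coord (pr1 w) (mxvec_unindex (L t)).1 - coord (pr2 w) (mxvec_unindex (L t)).1.
rewrite /minor.
have -> : \matrix_(a, b) Mtilde g w (K a) (L b) =
    (\matrix_(a, b) Mmat g (pr2 w) (K a) (mxvec_unindex (L b)).2) *m
    diag_mx (\row_t d t).
  apply/matrixP => a b; rewrite mul_mx_diag !mxE.
  by rewrite -{1}(mxvec_unindexK (L b)) mxvecE mxE mulrC.
rewrite det_mulmx det_diag; congr (_ * _).
by apply: eq_bigr => t _; rewrite mxE.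
Qed.

End TildeMinors.

(* The algebraic heart of the argument: (a - a') u v' is a combination of the
   2×2 minors of the pairs (a u, v) and (u, v) evaluated at two points. *)
Lemma diagonal_factor (F : comPzRingType) (a a' u u' v v' : F) :
  (a - a') * (u * v') = (a * u * v' - v * (a' * u')) - a' * (u * v' - v * u').
Proof. ring. Qed.

Section Generators.
Variables (R : realType) (n p r : nat) (x : Cn R n).
Variable g : 'I_p -> 'I_r -> Cn R n -> Cx R.
Hypothesis holo_g : forall a b, holo_near (g a b) x.

Lemma holo_minor k (I : 'I_k -> 'I_p) (J : 'I_k -> 'I_r) :
  holo_near (fun y => minor (Mmat g y) I J : Cx R) x.
Proof.
have holo_all : \forall y \near x, forall a b, differentiable (g a b) y.
  apply: (filter_forall (nbhs_filter x)) => a.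
  apply: (filter_forall (nbhs_filter x)) => b; exact: holo_g.
apply: filterS holo_all => y dg; apply: differentiable_det => a b.
by under eq_fun do rewrite !mxE; apply: dg.
Qed.

Lemma minor_in_Jk k (X : set (Cn R n)) (I : 'I_k -> 'I_p) (J : 'I_k -> 'I_r) :
  kindex I -> kindex J -> in_Jk k X x g (fun y => minor (Mmat g y) I J).
Proof.
move=> kI kJ; split; first exact: holo_minor.
by apply: germ_ideal_gen; exists I, J.
Qed.

Lemma coord_minor_in_Jk k (X : set (Cn R n)) (i : 'I_n)
  (I : 'I_k -> 'I_p) (J : 'I_k -> 'I_r) : kindex I -> kindex J ->
  in_Jk k X x g (fun y => coord y i * minor (Mmat g y) I J).
Proof.
move=> kI kJ; have [holo_m Jm] := minor_in_Jk X kI kJ.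
have holo_c : holo_near (fun y : Cn R n => coord y i : Cx R) x.
  by apply: holo_everywhere => z; apply: differentiable_coord.
by split; [exact: holo_mul | exact: germ_idealM].
Qed.

Lemma holo_coord_pr2 (i : 'I_n) (w0 : Cn R (n + n)) :
  holo_near (fun w : Cn R (n + n) => coord (pr2 w) i : Cx R) w0.
Proof.
apply: holo_everywhere => w.
have -> : (fun w : Cn R (n + n) => coord (pr2 w) i : Cx R) =
  (fun w : Cn R (n + n) => (w : 'M[R[i]]_(1, n + n)) ord0 (rshift n i) : Cx R).
  by apply/funext => z; rewrite /coord /pr2 mxE.
exact: differentiable_coord.
Qed.

Lemma J2kMD_gen_in_RHS k (X : set (Cn R n)) (s : Cn R (n + n) -> Cx R) :
  (1 <= k)%N -> J2kMD_gens k g s ->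
  germ_ideal (sqset X) (diagpt x) (RHS_gens k X x g) s.
Proof.
case: k => [//|k] _ [I [J [K [L [kI kJ kK kL ->]]]]].
pose i_ t := (mxvec_unindex (L t)).1.
have [c [Js [kJs sortJ]]] := det_cols_normalize R[i] (fun t => (mxvec_unindex (L t)).2) kJ.
pose m1 y := minor (Mmat g y) I J : Cx R.
pose m2 y := minor (Mmat g y) K Js : Cx R.
pose h1 y := coord y (i_ ord_max) * m1 y : Cx R.
pose sigma (t : 'I_k) := i_ (widen_ord (leqnSn k) t).
pose P w := \prod_(t < k) (coord (pr1 w) (sigma t) - coord (pr2 w) (sigma t)) : Cx R.
pose minor2 (h l : Cn R n -> Cx R) w := P w * (h (pr1 w) * l (pr2 w) - l (pr1 w) * h (pr2 w)).
have RHS_h1m2 : RHS_gens k.+1 X x g (minor2 h1 m2).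
  by exists sigma, h1, m2; split => //; [exact: coord_minor_in_Jk | exact: minor_in_Jk].
have RHS_m1m2 : RHS_gens k.+1 X x g (minor2 m1 m2).
  by exists sigma, m1, m2; split => //; exact: minor_in_Jk.
apply: (@germ_ideal_ext _ _ _ _ _
  (fun w => c * minor2 h1 m2 w + (- c * coord (pr2 w) (i_ ord_max)) * minor2 m1 m2 w)).
  apply: germ_idealD; apply: germ_idealM; try exact: germ_ideal_gen.
    exact: holo_cst.
  exact: holo_mul (holo_cst _ _) (holo_coord_pr2 _ _).
(* After factoring det(M~_KL), the generator is c·P·(z_i0 - z_i0')·m1·m2'. *)
move=> w; rewrite Mtilde_minor [minor _ K _]sortJ big_ord_recr /=.
change (\det _) with (m2 (pr2 w)); rewrite /minor2 /h1 -/(P w) -/(i_ ord_max) -/(m1 (pr1 w)).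
move: (P w) (m1 (pr1 w)) (m1 (pr2 w)) (m2 (pr1 w)) (m2 (pr2 w)).
move: (coord (pr1 w) (i_ ord_max)) (coord (pr2 w) (i_ ord_max)) => a a' Pw u u' v v'.
transitivity (c * Pw * ((a - a') * (u * v'))); first by ring.
by rewrite (diagonal_factor a a' u u' v v'); ring.
Qed.

End Generators.

Theorem mainTheorem12 (R : realType) (n p r k : nat)
  (X : set (Cn R n)) (x : Cn R n) (g : 'I_p -> 'I_r -> Cn R n -> Cx R) :
  analytic_set X -> X x ->
  (forall (a : 'I_p) (b : 'I_r), holo_near (g a b) x) ->
  (1 <= k)%N ->
  forall f : Cn R (n + n) -> Cx R,
    germ_ideal (sqset X) (diagpt x) (J2kMD_gens k g) f ->
    germ_ideal (sqset X) (diagpt x) (RHS_gens k X x g) f.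
Proof.
move=> _ _ holo_g k_ge1 f [m [s [c [gen_s holo_c f_eq]]]].
apply: (germ_ideal_near _ f_eq); apply: germ_ideal_lincomb => // l.
exact: J2kMD_gen_in_RHS.
Qed.
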